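(* For all integers $k\geq1$, $c_{ECH}^k(E(1,2))=c_{ECH}^k(C(1))$.
   Context: For $a,b>0$, let $N_0\leq N_1\leq N_2\leq\cdots$ be the numbers $ma+nb$ with $m,n\in\mathbb{Z}_{\geq0}$ arranged in nondecreasing order with multiplicities (so $N_0=0$), and set $c_{ECH}^k(E(a,b)):=N_k$ for $k\geq0$. For the polydisc $P(a,b)$ set $c_{ECH}^k(P(a,b)):=\min\{am+bn: m,n\in\mathbb{Z}_{\geq0},\ (m+1)(n+1)\geq k+1\}$. The cube $C(1)$ is $P(1,1)$. *)

From Stdlib Require Import Reals ClassicalEpsilon.
Open Scope R_scope.

Definition ell_val (a b : R) (p : nat * nat) : R :=
  INR (fst p) * a + INR (snd p) * b.

(* s enumerates every pair (m,n) exactly once (so values are listed with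
   multiplicity) in nondecreasing order of m*a + n*b. *)
Definition ech_sorting (a b : R) (s : nat -> nat * nat) : Prop :=
  (forall p : nat * nat, exists! i : nat, s i = p) /\
  (forall i j : nat, (i <= j)%nat -> ell_val a b (s i) <= ell_val a b (s j)).

(* c_ECH^k(E(a,b)) := N_k, the k-th term (from 0) of the sorted list *)
Definition c_ech_E (a b : R) (k : nat) : R :=
  ell_val a b (epsilon (inhabits (fun _ : nat => (0%nat, 0%nat))) (ech_sorting a b) k).

Definition is_min (S : R -> Prop) (x : R) : Prop :=
  S x /\ forall y, S y -> x <= y.

Definition c_ech_P (a b : R) (k : nat) : R :=
  epsilon (inhabits 0)
    (is_min (fun t => exists m n : nat,
       t = a * INR m + b * INR n /\ (k + 1 <= (m + 1) * (n + 1))%nat)).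

Definition c_ech_C1 (k : nat) : R := c_ech_P 1 1 k.

(* Both sides are computed from the counting function
   #{(m,n) : m + 2n <= v} = (floor(v/2) + 1)(ceil(v/2) + 1).
   For the ellipsoid, the k-th term of the sorted list is <= v exactly when
   k is smaller than this count, so N_k is the least v with k + 1 <= count v.
   For the cube, among all (m,n) with m + n = v the product (m+1)(n+1) is
   largest for the balanced split, where it equals the same count; hence the
   cube capacity is the least v with k + 1 <= count v as well. *)

From Stdlib Require Import Reals.
From Stdlib Require Import Lia List Lra ClassicalEpsilon FinFun.
Import ListNotations.
Open Scope R_scope.

Lemma div2_cases (v : nat) : (v = 2 * (v / 2) \/ v = 2 * (v / 2) + 1)%nat.
Proof.
  pose proof (Nat.div_mod v 2). pose proof (Nat.mod_upper_bound v 2). lia.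
Qed.

Lemma NoDup_app_In_l {A} (l1 l2 : list A) (a : A) :
  NoDup (l1 ++ l2) -> In a l1 -> ~ In a l2.
Proof.
  intros Hl Ha1 Ha2. apply in_split in Ha2 as [x [y ->]].
  rewrite app_assoc in Hl. apply NoDup_remove_2 in Hl.
  apply Hl, in_or_app. left. apply in_or_app. now left.
Qed.

Lemma ech_sorting_injective (a b : R) (s : nat -> nat * nat) :
  ech_sorting a b s -> Injective s.
Proof.
  intros [Hbij _] i j Hij. destruct (Hbij (s i)) as [x [_ Hx]].
  rewrite <- (Hx i eq_refl). apply Hx. auto.
Qed.

Lemma ech_sorting_value_le_iff (a b : R) (s : nat -> nat * nat)
    (l : list (nat * nat)) (t : R) :
  ech_sorting a b s -> NoDup l -> (forall p, In p l <-> ell_val a b p <= t) ->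
  forall i, ell_val a b (s i) <= t <-> (i < length l)%nat.
Proof.
  intros Hs Hl Hlt i. pose proof (ech_sorting_injective a b s Hs) as Hinj.
  destruct Hs as [Hbij Hmono]. split.
  - intros Hi.
    assert (Hincl : (length (map s (seq 0 (S i))) <= length l)%nat).
    { apply NoDup_incl_length.
      - apply Injective_map_NoDup; [exact Hinj | apply seq_NoDup].
      - intros p Hp. apply in_map_iff in Hp. destruct Hp as [j [<- Hj]].
        apply in_seq in Hj. apply Hlt.
        apply Rle_trans with (ell_val a b (s i)); auto. apply Hmono. lia. }
    rewrite length_map, length_seq in Hincl. lia.
  - intros Hi. destruct (Rle_or_lt (ell_val a b (s i)) t) as [| Hgt]; auto.
    exfalso.
    assert (Hincl : (length l <= length (map s (seq 0 i)))%nat).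
    { apply NoDup_incl_length; [exact Hl |].
      intros p Hp. apply Hlt in Hp. destruct (Hbij p) as [j [<- _]].
      apply in_map_iff. exists j. split; auto. apply in_seq.
      destruct (Nat.lt_ge_cases j i) as [| Hij]; [lia |].
      specialize (Hmono i j Hij). lra. }
    rewrite length_map, length_seq in Hincl. lia.
Qed.

Lemma c_ech_E_of_sorting (a b : R) (s : nat -> nat * nat) :
  ech_sorting a b s ->
  exists s', ech_sorting a b s' /\ forall k, c_ech_E a b k = ell_val a b (s' k).
Proof.
  intros Hs. eexists. split; [| intros k; reflexivity].
  apply epsilon_spec. exists s. exact Hs.
Qed.

Lemma c_ech_P_is_min (a b : R) (k : nat) (x : R) :
  is_min (fun t => exists m n : nat,
            t = a * INR m + b * INR n /\ (k + 1 <= (m + 1) * (n + 1))%nat) x ->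
  c_ech_P a b k = x.
Proof.
  intros Hx. unfold c_ech_P.
  match goal with |- epsilon _ ?P = _ =>
    assert (He : P (epsilon (inhabits 0) P)) by (apply epsilon_spec; eauto) end.
  destruct He as [He1 He2], Hx as [Hx1 Hx2]. apply Rle_antisym; auto.
Qed.

Definition weight12 (p : nat * nat) : nat := (fst p + 2 * snd p)%nat.

Lemma ell_val_1_2 (p : nat * nat) : ell_val 1 2 p = INR (weight12 p).
Proof. unfold ell_val, weight12. rewrite plus_INR, mult_INR. simpl. lra. Qed.

Definition level (w : nat) : list (nat * nat) :=
  map (fun j => (w - 2 * j, j)%nat) (seq 0 (w / 2 + 1)).

Fixpoint sublevel (v : nat) : list (nat * nat) :=
  match v with
  | 0 => level 0
  | S v' => sublevel v' ++ level (S v')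
  end.

Lemma In_level (w : nat) (p : nat * nat) : In p (level w) <-> weight12 p = w.
Proof.
  unfold level, weight12. rewrite in_map_iff. split.
  - intros [j [<- Hj]]. apply in_seq in Hj. cbn [fst snd]. destruct (div2_cases w); lia.
  - destruct p as [m n]; cbn [fst snd]. intros Hw. exists n. split.
    + f_equal. lia.
    + apply in_seq. destruct (div2_cases w); lia.
Qed.

Lemma NoDup_level (w : nat) : NoDup (level w).
Proof.
  apply Injective_map_NoDup; [| apply seq_NoDup].
  intros i j Hij. now injection Hij.
Qed.

Lemma In_sublevel (v : nat) (p : nat * nat) :
  In p (sublevel v) <-> (weight12 p <= v)%nat.
Proof.
  induction v as [| v IHv]; cbn [sublevel].
  - rewrite In_level. lia.
  - rewrite in_app_iff, IHv, In_level. lia.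
Qed.

Lemma NoDup_sublevel (v : nat) : NoDup (sublevel v).
Proof.
  induction v as [| v IHv]; cbn [sublevel]; [apply NoDup_level |].
  apply NoDup_app; auto using NoDup_level.
  intros p Hp Hp'. apply In_sublevel in Hp. apply In_level in Hp'. lia.
Qed.

Lemma length_sublevel (v : nat) :
  length (sublevel v) = ((v / 2 + 1) * (v - v / 2 + 1))%nat.
Proof.
  induction v as [| v IHv]; [reflexivity |]. simpl sublevel.
  unfold level. rewrite length_app, IHv, length_map, length_seq.
  destruct (div2_cases v); destruct (div2_cases (S v)); nia.
Qed.

Lemma lt_length_sublevel (v : nat) : (v < length (sublevel v))%nat.
Proof. rewrite length_sublevel. destruct (div2_cases v); nia. Qed.

Lemma succ_mul_succ_le_length_sublevel (m n : nat) :
  ((m + 1) * (n + 1) <= length (sublevel (m + n)))%nat.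
Proof.
  rewrite length_sublevel. pose proof (div2_cases (m + n)) as Hh.
  remember ((m + n) / 2)%nat as h eqn:Eh. clear Eh.
  destruct (Nat.le_ge_cases m h) as [Hm | Hm].
  - replace m with (h - (h - m))%nat in * by lia.
    destruct Hh; [replace n with (h + (h - m))%nat by lia
                 | replace n with (h + 1 + (h - m))%nat by lia]; nia.
  - replace m with (h + (m - h))%nat in * by lia. destruct Hh; nia.
Qed.

Lemma sublevel_prefix (v w : nat) :
  (v <= w)%nat -> exists l, sublevel w = sublevel v ++ l.
Proof.
  induction 1 as [| w _ [l Hl]]; [exists []; now rewrite app_nil_r |].
  exists (l ++ level (S w)). simpl. now rewrite Hl, app_assoc.
Qed.

Lemma nth_sublevel_stable (i v w : nat) :
  (i < length (sublevel v))%nat -> (v <= w)%nat ->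
  nth i (sublevel w) (0, 0)%nat = nth i (sublevel v) (0, 0)%nat.
Proof.
  intros Hi Hvw. destruct (sublevel_prefix v w Hvw) as [l ->].
  now apply app_nth1.
Qed.

(* Prefixes of the sublevel lists are stable and [sublevel k] has more than k
   entries, so the default value of [nth] is never used. *)
Definition sorted12 (k : nat) : nat * nat := nth k (sublevel k) (0, 0)%nat.

Lemma sorted12_nth (i w : nat) :
  (i <= w)%nat -> sorted12 i = nth i (sublevel w) (0, 0)%nat.
Proof.
  intros Hiw. symmetry. apply nth_sublevel_stable; auto using lt_length_sublevel.
Qed.

Lemma weight_sorted12_le_iff (i v : nat) :
  (weight12 (sorted12 i) <= v)%nat <-> (i < length (sublevel v))%nat.
Proof.
  set (w := Nat.max i v). rewrite (sorted12_nth i w) by lia.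
  destruct (sublevel_prefix v w ltac:(lia)) as [l Hl].
  assert (Hiw : (i < length (sublevel w))%nat).
  { pose proof (lt_length_sublevel w). lia. }
  destruct (Nat.lt_ge_cases i (length (sublevel v))) as [Hi | Hi].
  - split; [lia | intros _].
    rewrite (nth_sublevel_stable i v w) by (auto; lia).
    apply In_sublevel, nth_In, Hi.
  - split; [intros Hle | lia]. exfalso.
    rewrite Hl, length_app in Hiw. rewrite Hl, app_nth2 in Hle by exact Hi.
    apply (NoDup_app_In_l (sublevel v) l (nth (i - length (sublevel v)) l (0, 0)%nat)).
    + rewrite <- Hl. apply NoDup_sublevel.
    + apply In_sublevel, Hle.
    + apply nth_In. lia.
Qed.

Lemma sorting12 : ech_sorting 1 2 sorted12.
Proof.
  split.
  - intros p.
    destruct (In_nth (sublevel (weight12 p)) p (0, 0)%nat) as [i [Hi Hp]].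
    { apply In_sublevel. lia. }
    assert (Hsi : sorted12 i = p).
    { destruct (Nat.le_ge_cases i (weight12 p)).
      - now rewrite (sorted12_nth i (weight12 p)).
      - unfold sorted12. now rewrite (nth_sublevel_stable i (weight12 p) i). }
    exists i. split; [exact Hsi |]. intros j Hj.
    set (w := Nat.max i j). pose proof (lt_length_sublevel w).
    rewrite (sorted12_nth i w) in Hsi by lia.
    rewrite (sorted12_nth j w) in Hj by lia.
    apply (NoDup_nth (sublevel w) (0, 0)%nat); try lia; [apply NoDup_sublevel | congruence].
  - intros i j Hij. rewrite !ell_val_1_2. apply le_INR.
    apply weight_sorted12_le_iff.
    apply Nat.le_lt_trans with j; [exact Hij |].
    now apply weight_sorted12_le_iff.
Qed.

Lemma sorting12_weight_le_iff (s : nat -> nat * nat) (i v : nat) :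
  ech_sorting 1 2 s ->
  (weight12 (s i) <= v)%nat <-> (i < length (sublevel v))%nat.
Proof.
  intros Hs. rewrite <- (ech_sorting_value_le_iff 1 2 s (sublevel v) (INR v) Hs).
  - rewrite ell_val_1_2. split; [apply le_INR | apply INR_le].
  - apply NoDup_sublevel.
  - intros p. rewrite In_sublevel, ell_val_1_2.
    split; [apply le_INR | apply INR_le].
Qed.

Theorem lemma2p6 : forall k : nat, (1 <= k)%nat -> c_ech_E 1 2 k = c_ech_C1 k.
Proof.
  intros k _.
  destruct (c_ech_E_of_sorting 1 2 sorted12 sorting12) as [s [Hs ->]].
  rewrite ell_val_1_2. set (v0 := weight12 (s k)).
  assert (Hv0 : forall v, (v0 <= v)%nat <-> (k < length (sublevel v))%nat)
    by (intros v; exact (sorting12_weight_le_iff s k v Hs)).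
  unfold c_ech_C1. symmetry. apply c_ech_P_is_min. split.
  - exists (v0 / 2)%nat, (v0 - v0 / 2)%nat. split.
    + rewrite !Rmult_1_l, <- plus_INR. f_equal. destruct (div2_cases v0); lia.
    + pose proof (proj1 (Hv0 v0) (le_n _)) as Hk.
      rewrite length_sublevel in Hk. lia.
  - intros y [m [n [-> Hmn]]]. rewrite !Rmult_1_l, <- plus_INR. apply le_INR.
    apply Hv0. pose proof (succ_mul_succ_le_length_sublevel m n). lia.
Qed.
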